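(* Let $L=(L;\wedge,\vee,{}^\ast,{}^\prime,0,1)$ be a pseudocomplemented de Morgan algebra and let $(P;\tau,\leq,\zeta)$ be its dual $pm$-space. Then $L$ is regular if and only if the poset $(P;\leq)$ has height at most $1$, i.e. every chain in $(P;\leq)$ has at most $2$ elements.
   Context: A pseudocomplemented de Morgan algebra ($pm$-algebra) is an algebra $(L;\wedge,\vee,{}^\ast,{}^\prime,0,1)$ such that $(L;\wedge,\vee,0,1)$ is a bounded distributive lattice, ${}^\ast$ is the pseudocomplement ($x\wedge y=0$ iff $y\le x^\ast$), and ${}^\prime$ is a de Morgan involution ($(x\vee y)'=x'\wedge y'$, $(x\wedge y)'=x'\vee y'$, $0'=1$, $1'=0$, $x''=x$). An algebra is regular if any two congruences on it having a common class are equal. A $pm$-space is $(P;\tau,\le,\zeta)$ where $(P;\tau,\le)$ is a Priestley space, $[X)$ is clopen for every clopen decreasing $X\subseteq P$, and $\zeta$ is a continuous order-reversing involution of $P$. The dual $pm$-space of $L$ is the set of prime ideals of $L$ ordered by inclusion, with the Priestley topology and $\zeta(I)=\{a\in L: a'\notin I\}$; $L$ is isomorphic to the algebra of clopen decreasing subsets of its dual space with $\cap,\cup,\emptyset,P$, $X^\ast=P\setminus[X)$ and $X'=P\setminus\zeta(X)$. *)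

Record pmAlgebra := PmAlgebra {
  carrier :> Type;
  meet : carrier -> carrier -> carrier;
  join : carrier -> carrier -> carrier;
  pc   : carrier -> carrier;
  inv  : carrier -> carrier;
  bot  : carrier;
  top  : carrier;
  meetC : forall x y, meet x y = meet y x;
  joinC : forall x y, join x y = join y x;
  meetA : forall x y z, meet x (meet y z) = meet (meet x y) z;
  joinA : forall x y z, join x (join y z) = join (join x y) z;
  meet_absorb : forall x y, meet x (join x y) = x;
  join_absorb : forall x y, join x (meet x y) = x;
  meet_joinDr : forall x y z, meet x (join y z) = join (meet x y) (meet x z);
  join_bot : forall x, join x bot = x;
  meet_top : forall x, meet x top = x;
  (* pseudocomplement: x /\ y = 0  iff  y <= x^*  (y <= z means meet y z = y) *)
  pcP : forall x y, meet x y = bot <-> meet y (pc x) = y;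
  inv_join : forall x y, inv (join x y) = meet (inv x) (inv y);
  inv_meet : forall x y, inv (meet x y) = join (inv x) (inv y);
  inv_bot : inv bot = top;
  inv_top : inv top = bot;
  invK : forall x, inv (inv x) = x
}.

Arguments meet {p}. Arguments join {p}. Arguments pc {p}. Arguments inv {p}.
Arguments bot {p}. Arguments top {p}.

Section Defs.
Variable L : pmAlgebra.

Definition le (x y : L) : Prop := meet x y = x.

Definition congruence (th : L -> L -> Prop) : Prop :=
  (forall x, th x x) /\
  (forall x y, th x y -> th y x) /\
  (forall x y z, th x y -> th y z -> th x z) /\
  (forall x1 y1 x2 y2, th x1 y1 -> th x2 y2 -> th (meet x1 x2) (meet y1 y2)) /\
  (forall x1 y1 x2 y2, th x1 y1 -> th x2 y2 -> th (join x1 x2) (join y1 y2)) /\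
  (forall x y, th x y -> th (pc x) (pc y)) /\
  (forall x y, th x y -> th (inv x) (inv y)).

Definition regular : Prop :=
  forall th ph : L -> L -> Prop, congruence th -> congruence ph ->
    (exists a, forall x, th a x <-> ph a x) ->
    forall x y, th x y <-> ph x y.

(** Prime ideals of L (points of the dual pm-space). *)
Definition prime_ideal (I : L -> Prop) : Prop :=
  I bot /\
  (forall x y, I y -> le x y -> I x) /\
  (forall x y, I x -> I y -> I (join x y)) /\
  ~ I top /\
  (forall x y, I (meet x y) -> I x \/ I y).

(** Order of the dual space: inclusion; equality of points is equality of sets. *)
Definition incl (I J : L -> Prop) : Prop := forall x, I x -> J x.
Definition same (I J : L -> Prop) : Prop := forall x, I x <-> J x.

Definition pchain (C : (L -> Prop) -> Prop) : Prop :=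
  (forall I, C I -> prime_ideal I) /\
  (forall I J, C I -> C J -> incl I J \/ incl J I).

Definition height_at_most_1 : Prop :=
  forall C, pchain C ->
    forall I J K, C I -> C J -> C K -> same I J \/ same J K \/ same I K.

End Defs.

(** Both conditions are equivalent to the inequality [x <= y] for every
    codense [x] (that is, [x'* = 0]) and every dense [y] ([y* = 0]).

    Given that inequality, a congruence is determined by its class of [0]:
    the class of [0] determines the congruence on the skeleton [{x | x** = x}],
    hence on the values [x*] and [x+ = x'*'], and [x = (x /\ y) \/ (x /\ x+)]
    reduces the rest to these values because [x /\ x+] is codense.  Conversely,
    the congruence [x*, x'* agree] has the same class of [0] as the identity,
    and for codense [x] and dense [y] it identifies [x \/ y] with [y].

    On the dual space, the inequality forbids a chain [X < Y < Z] of prime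
    ideals: with [a] in [Y \ X] and [b] in [Z \ Y], the codense element
    [b /\ b+] lies below the dense element [a \/ a*], which belongs to [Y].
    Conversely, if [x] is codense, [y] is dense and [x <= y] fails, the prime
    ideal theorem gives a prime [P] containing [y] but not [x]; a dense element
    never lies in a minimal prime, so some prime [Q < P] misses [y], and
    dually (through the involution [zeta]) some prime [K > P] contains [x]. *)

From Stdlib Require Import Classical.
From mathcomp Require classical_sets.

Arguments meetC {p}. Arguments joinC {p}. Arguments meetA {p}. Arguments joinA {p}.
Arguments meet_absorb {p}. Arguments join_absorb {p}. Arguments meet_joinDr {p}.
Arguments join_bot {p}. Arguments meet_top {p}. Arguments pcP {p}.
Arguments inv_join {p}. Arguments inv_meet {p}. Arguments inv_bot {p}.
Arguments inv_top {p}. Arguments invK {p}.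

Local Notation "x ≤ y" := (le _ x y) (at level 70).

Section Lattice.
Context {L : pmAlgebra}.
Implicit Types x y z : L.

Lemma meetxx x : meet x x = x.
Proof. rewrite <- (join_absorb x x) at 2. apply meet_absorb. Qed.

Lemma bot_join x : join bot x = x.
Proof. rewrite joinC. apply join_bot. Qed.

Lemma top_meet x : meet top x = x.
Proof. rewrite meetC. apply meet_top. Qed.

Lemma bot_meet x : meet bot x = bot.
Proof. rewrite <- (bot_join x) at 1. apply meet_absorb. Qed.

Lemma meet_bot x : meet x bot = bot.
Proof. rewrite meetC. apply bot_meet. Qed.

(* Distributivity of join over meet is the de Morgan dual of the axiom. *)
Lemma join_meetDr x y z : join x (meet y z) = meet (join x y) (join x z).
Proof.
  transitivity (inv (inv (join x (meet y z)))); [symmetry; apply invK|].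
  rewrite inv_join, (inv_meet y z), meet_joinDr, inv_join, !inv_meet, !invK.
  reflexivity.
Qed.

Lemma meet_joinDl x y z : meet (join y z) x = join (meet y x) (meet z x).
Proof. rewrite meetC, meet_joinDr, (meetC x y), (meetC x z). reflexivity. Qed.

Lemma le_join x y : x ≤ y <-> join x y = y.
Proof.
  unfold le; split; intro H.
  - rewrite <- H, joinC, meetC. apply join_absorb.
  - rewrite <- H. apply meet_absorb.
Qed.

Lemma le_refl x : x ≤ x.
Proof. apply meetxx. Qed.

Lemma le_trans x y z : x ≤ y -> y ≤ z -> x ≤ z.
Proof. unfold le; intros H1 H2. rewrite <- H1, <- meetA, H2. reflexivity. Qed.

Lemma le_antisym x y : x ≤ y -> y ≤ x -> x = y.
Proof. unfold le; intros H1 H2. rewrite <- H1, meetC. exact H2. Qed.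

Lemma le_meet_l x y : meet x y ≤ x.
Proof. unfold le. rewrite (meetC x y), <- meetA, meetxx. reflexivity. Qed.

Lemma le_meet_r x y : meet x y ≤ y.
Proof. unfold le. rewrite <- meetA, meetxx. reflexivity. Qed.

Lemma le_join_l x y : x ≤ join x y.
Proof. apply meet_absorb. Qed.

Lemma le_join_r x y : y ≤ join x y.
Proof. rewrite joinC. apply meet_absorb. Qed.

Lemma meet_glb x y z : z ≤ x -> z ≤ y -> z ≤ meet x y.
Proof. unfold le; intros H1 H2. rewrite meetA, H1, H2. reflexivity. Qed.

Lemma join_lub x y z : x ≤ z -> y ≤ z -> join x y ≤ z.
Proof. rewrite !le_join; intros H1 H2. rewrite <- joinA, H2, H1. reflexivity. Qed.

Lemma meet_mono x y x' y' : x ≤ x' -> y ≤ y' -> meet x y ≤ meet x' y'.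
Proof.
  intros. apply meet_glb.
  - apply le_trans with x; [apply le_meet_l | assumption].
  - apply le_trans with y; [apply le_meet_r | assumption].
Qed.

Lemma join_mono x y x' y' : x ≤ x' -> y ≤ y' -> join x y ≤ join x' y'.
Proof.
  intros. apply join_lub.
  - apply le_trans with x'; [assumption | apply le_join_l].
  - apply le_trans with y'; [assumption | apply le_join_r].
Qed.

Lemma le_bot x : bot ≤ x.
Proof. apply bot_meet. Qed.

Lemma le_top x : x ≤ top.
Proof. apply meet_top. Qed.

Lemma le_bot_eq x : x ≤ bot -> x = bot.
Proof. unfold le; intro H. rewrite <- H, meet_bot. reflexivity. Qed.

Lemma le_top_eq x : top ≤ x -> x = top.
Proof. unfold le; intro H. rewrite <- H, top_meet. reflexivity. Qed.

Lemma pc_meet x : meet x (pc x) = bot.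
Proof. apply (proj2 (pcP x (pc x))), meetxx. Qed.

Lemma pc_le x y : meet x y = bot -> y ≤ pc x.
Proof. apply pcP. Qed.

Lemma pc_anti x y : x ≤ y -> pc y ≤ pc x.
Proof.
  intro H. apply pc_le, le_bot_eq. rewrite <- (pc_meet y).
  apply meet_mono; [assumption | apply le_refl].
Qed.

Lemma pc_pc x : x ≤ pc (pc x).
Proof. apply pc_le. rewrite meetC. apply pc_meet. Qed.

Lemma pc3 x : pc (pc (pc x)) = pc x.
Proof. apply le_antisym; [apply pc_anti, pc_pc | apply pc_pc]. Qed.

Lemma pc_bot : pc (@bot L) = top.
Proof. apply le_top_eq, pc_le, bot_meet. Qed.

Lemma pc_top : pc (@top L) = bot.
Proof. rewrite <- (top_meet (pc top)). apply pc_meet. Qed.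

Lemma pc_join x y : pc (join x y) = meet (pc x) (pc y).
Proof.
  apply le_antisym.
  - apply meet_glb; apply pc_anti; [apply le_join_l | apply le_join_r].
  - apply pc_le. rewrite meet_joinDl. rewrite (meetC (pc x) (pc y)) at 2.
    rewrite meetA, pc_meet, bot_meet, meetA, pc_meet, bot_meet, bot_join.
    reflexivity.
Qed.

Lemma pc_meet_pcpc x z : pc (meet x z) = pc (meet (pc (pc x)) z).
Proof.
  apply le_antisym.
  - apply pc_le. set (w := meet (pc (meet x z)) z).
    assert (w_le : w ≤ pc x).
    { apply pc_le. unfold w. rewrite (meetC (pc (meet x z)) z), meetA. apply pc_meet. }
    apply le_bot_eq. rewrite <- (pc_meet (pc x)). apply meet_glb.
    + apply le_trans with w; [|exact w_le]. apply meet_glb; [apply le_meet_r|].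
      apply le_trans with (meet (pc (pc x)) z); [apply le_meet_l | apply le_meet_r].
    + apply le_trans with (meet (pc (pc x)) z); apply le_meet_l.
  - apply pc_anti, meet_mono; [apply pc_pc | apply le_refl].
Qed.

Lemma pc_meet_cong (a1 a2 b1 b2 : L) :
  pc a1 = pc b1 -> pc a2 = pc b2 -> pc (meet a1 a2) = pc (meet b1 b2).
Proof.
  intros H1 H2.
  rewrite pc_meet_pcpc, meetC, pc_meet_pcpc, H1, H2.
  rewrite <- pc_meet_pcpc, meetC, <- pc_meet_pcpc. reflexivity.
Qed.

Lemma inv_anti x y : x ≤ y -> inv y ≤ inv x.
Proof. intro H. apply le_join. rewrite joinC, <- inv_meet, H. reflexivity. Qed.

Definition plus x : L := inv (pc (inv x)).

Lemma join_plus x : join x (plus x) = top.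
Proof.
  unfold plus. rewrite <- (invK x) at 1. rewrite <- inv_meet, pc_meet. apply inv_bot.
Qed.

Definition dense x : Prop := pc x = bot.

Lemma dense_join_pc x : dense (join x (pc x)).
Proof. unfold dense. rewrite pc_join. apply pc_meet. Qed.

Lemma dense_inv_meet_plus x : dense (inv (meet x (plus x))).
Proof. unfold plus. rewrite inv_meet, invK. apply dense_join_pc. Qed.

End Lattice.

Definition codense_le_dense (L : pmAlgebra) : Prop :=
  forall x y : L, dense (inv x) -> dense y -> x ≤ y.

Section Congruence.
Context {L : pmAlgebra}.
Variable th : L -> L -> Prop.
Hypothesis th_cong : congruence L th.

Lemma cg_refl x : th x x.
Proof. revert x. apply th_cong. Qed.

Lemma cg_sym x y : th x y -> th y x.
Proof. revert x y. apply th_cong. Qed.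

Lemma cg_trans x y z : th x y -> th y z -> th x z.
Proof. revert x y z. apply th_cong. Qed.

Lemma cg_meet x1 y1 x2 y2 : th x1 y1 -> th x2 y2 -> th (meet x1 x2) (meet y1 y2).
Proof. revert x1 y1 x2 y2. apply th_cong. Qed.

Lemma cg_join x1 y1 x2 y2 : th x1 y1 -> th x2 y2 -> th (join x1 x2) (join y1 y2).
Proof. revert x1 y1 x2 y2. apply th_cong. Qed.

Lemma cg_pc x y : th x y -> th (pc x) (pc y).
Proof. revert x y. apply th_cong. Qed.

Lemma cg_inv x y : th x y -> th (inv x) (inv y).
Proof. revert x y. apply th_cong. Qed.

Lemma cg_eq x y : x = y -> th x y.
Proof. intros <-. apply cg_refl. Qed.

Lemma cg_meetl z x y : th x y -> th (meet z x) (meet z y).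
Proof. intro H. apply cg_meet; [apply cg_refl | exact H]. Qed.

Lemma cg_joinl z x y : th x y -> th (join z x) (join z y).
Proof. intro H. apply cg_join; [apply cg_refl | exact H]. Qed.

(* With [z := u /\ v*], from [z ~ 0] we get [z* ~ 1], and [u /\ z* <= v** = v]. *)
Lemma cg_meet_of_meet_pc_bot u v :
  pc (pc v) = v -> th (meet u (pc v)) bot -> th u (meet u v).
Proof.
  intros v_reg Hz. set (z := meet u (pc v)) in *.
  assert (z_top : th (pc z) top) by (rewrite <- pc_bot; apply cg_pc, Hz).
  assert (u_le : le L (meet u (pc z)) v).
  { rewrite <- v_reg. apply pc_le. unfold z.
    rewrite meetA, (meetC (pc v) u). apply pc_meet. }
  apply cg_trans with (meet u (pc z)).
  - rewrite <- (meet_top u) at 1. apply cg_meetl, cg_sym, z_top.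
  - unfold le in u_le. rewrite <- u_le at 1. apply cg_meet; [|apply cg_refl].
    apply cg_trans with (meet u top); [apply cg_meetl, z_top | apply cg_eq, meet_top].
Qed.

(* [x = (x /\ y) \/ (x /\ y+) ~ (x /\ y) \/ (x /\ x+)], and [w := x /\ x+] is
   codense, so [w = w /\ (y* \/ y) ~ w /\ (x* \/ y) = w /\ y]. *)
Lemma cg_of_pc_plus (HR : codense_le_dense L) x y :
  th (pc x) (pc y) -> th (plus x) (plus y) -> th x y.
Proof.
  assert (half : forall x y, th (pc x) (pc y) -> th (plus x) (plus y) ->
                             th x (meet x y)).
  { clear x y. intros x y Hpc Hplus. set (w := meet x (plus x)).
    assert (w_le : le L w (join y (pc y)))
      by (apply HR; [apply dense_inv_meet_plus | apply dense_join_pc]).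
    apply cg_trans with (join (meet x y) w).
    { rewrite <- (meet_top x) at 1. rewrite <- (join_plus y).
      unfold w. rewrite <- meet_joinDr. apply cg_meetl, cg_joinl, cg_sym, Hplus. }
    apply cg_trans with (join (meet x y) (meet w y)).
    { apply cg_joinl. unfold le in w_le. rewrite <- w_le at 1.
      apply cg_trans with (meet w (join y (pc x))).
      - apply cg_meetl, cg_joinl, cg_sym, Hpc.
      - apply cg_eq. rewrite meet_joinDr.
        assert (w_pc : meet w (pc x) = bot).
        { apply le_bot_eq. rewrite <- (pc_meet x).
          apply meet_mono; [apply le_meet_l | apply le_refl]. }
        rewrite w_pc, join_bot. reflexivity. }
    apply cg_eq. rewrite joinC. apply le_join.
    apply meet_mono; [apply le_meet_l | apply le_refl]. }
  intros Hpc Hplus.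
  apply cg_trans with (meet x y); [apply half; assumption|].
  rewrite meetC. apply cg_sym, half; apply cg_sym; assumption.
Qed.

End Congruence.

Section Kernel.
Context {L : pmAlgebra}.
Variables th ph : L -> L -> Prop.
Hypotheses (th_cong : congruence L th) (ph_cong : congruence L ph).

(* [s ~ 0] gives [c ~ c \/ s] and [c ~ c /\ s*], hence [s = s /\ (c \/ s)] is
   [ph]-related to [s /\ c /\ s* = 0]. *)
Lemma kernel_incl_of_common_class c :
  (forall z, th c z <-> ph c z) -> forall s, th s bot -> ph s bot.
Proof.
  intros Hc s Hs.
  assert (c_join : ph c (join c s)).
  { apply Hc, (cg_sym _ th_cong). rewrite <- (join_bot c) at 2.
    apply (cg_joinl _ th_cong), Hs. }
  assert (c_meet : ph c (meet c (pc s))).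
  { apply Hc, (cg_sym _ th_cong). rewrite <- (meet_top c) at 2. rewrite <- pc_bot.
    apply (cg_meetl _ th_cong), (cg_pc _ th_cong), Hs. }
  apply (cg_trans _ ph_cong) with (meet s c).
  - rewrite <- (meet_absorb s c) at 1. rewrite (joinC s c).
    apply (cg_meetl _ ph_cong), (cg_sym _ ph_cong), c_join.
  - apply (cg_trans _ ph_cong) with (meet s (meet c (pc s))).
    + apply (cg_meetl _ ph_cong), c_meet.
    + apply (cg_eq _ ph_cong). rewrite (meetC c), meetA, pc_meet, bot_meet.
      reflexivity.
Qed.

Hypothesis kernel_incl : forall s, th s bot -> ph s bot.

Lemma cong_incl_on_skeleton u v :
  th u v -> pc (pc u) = u -> pc (pc v) = v -> ph u v.
Proof.
  intros Huv u_reg v_reg.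
  assert (Hu : ph u (meet u v)).
  { apply (cg_meet_of_meet_pc_bot _ ph_cong); [exact v_reg|]. apply kernel_incl.
    rewrite <- (pc_meet v). apply (cg_meet _ th_cong); [exact Huv | apply cg_refl, th_cong]. }
  assert (Hv : ph v (meet v u)).
  { apply (cg_meet_of_meet_pc_bot _ ph_cong); [exact u_reg|]. apply kernel_incl.
    rewrite <- (pc_meet u).
    apply (cg_meet _ th_cong); [apply (cg_sym _ th_cong), Huv | apply cg_refl, th_cong]. }
  rewrite meetC in Hv.
  apply (cg_trans _ ph_cong) with (meet u v); [exact Hu | apply (cg_sym _ ph_cong), Hv].
Qed.

Lemma cong_incl_of_kernel_incl (HR : codense_le_dense L) x y : th x y -> ph x y.
Proof.
  intros Hxy. apply (cg_of_pc_plus _ ph_cong HR).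
  - apply cong_incl_on_skeleton; [apply (cg_pc _ th_cong), Hxy | apply pc3 | apply pc3].
  - apply (cg_inv _ ph_cong), cong_incl_on_skeleton; try apply pc3.
    apply (cg_pc _ th_cong), (cg_inv _ th_cong), Hxy.
Qed.

End Kernel.

Lemma codense_le_dense_regular (L : pmAlgebra) : codense_le_dense L -> regular L.
Proof.
  intros HR th ph Hth Hph [c Hc] x y. split.
  - apply (cong_incl_of_kernel_incl th ph Hth Hph); [|exact HR].
    apply kernel_incl_of_common_class with c; assumption.
  - apply (cong_incl_of_kernel_incl ph th Hph Hth); [|exact HR].
    apply kernel_incl_of_common_class with c; [assumption .. |].
    intro z. symmetry. apply Hc.
Qed.

Section PcEquiv.
Context {L : pmAlgebra}.

Definition pc_equiv (x y : L) : Prop := pc x = pc y /\ pc (inv x) = pc (inv y).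

Lemma pc_equiv_congruence : congruence L pc_equiv.
Proof.
  unfold pc_equiv. split; [|split; [|split; [|split; [|split; [|split]]]]].
  - split; reflexivity.
  - intros x y [H1 H2]. split; symmetry; assumption.
  - intros x y z [H1 H2] [H3 H4]. split; congruence.
  - intros x1 y1 x2 y2 [H1 H2] [H3 H4]. split.
    + apply pc_meet_cong; assumption.
    + rewrite !inv_meet, !pc_join. congruence.
  - intros x1 y1 x2 y2 [H1 H2] [H3 H4]. split.
    + rewrite !pc_join. congruence.
    + rewrite !inv_join. apply pc_meet_cong; assumption.
  - intros x y [H1 H2]. rewrite H1. split; reflexivity.
  - intros x y [H1 H2]. rewrite !invK. split; assumption.
Qed.

Lemma pc_equiv_bot (z : L) : pc_equiv bot z -> z = bot.
Proof.
  intros [H _]. rewrite pc_bot in H.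
  rewrite <- (meet_top z), H, pc_meet. reflexivity.
Qed.

Lemma eq_congruence : congruence L eq.
Proof. repeat split; intros; subst; reflexivity. Qed.

End PcEquiv.

Lemma regular_codense_le_dense (L : pmAlgebra) : regular L -> codense_le_dense L.
Proof.
  intros Hreg x y Hx Hy.
  assert (pc_equiv_eq : forall u v : L, pc_equiv u v -> u = v).
  { intros u v. apply (Hreg _ _ pc_equiv_congruence eq_congruence).
    exists bot. intro z. split.
    - intro H. symmetry. apply pc_equiv_bot, H.
    - intros <-. split; reflexivity. }
  apply le_join. rewrite joinC. apply pc_equiv_eq. split.
  - rewrite pc_join, Hy, bot_meet. reflexivity.
  - rewrite inv_join. rewrite <- (meet_top (inv y)) at 2.
    apply pc_meet_cong; [reflexivity|]. rewrite Hx, pc_top. reflexivity.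
Qed.

Section Separation.
Context {L : pmAlgebra}.
Implicit Types X Y A B : L -> Prop.

Definition down_closed X : Prop := forall x y, X y -> x ≤ y -> X x.
Definition join_closed X : Prop := forall x y, X x -> X y -> X (join x y).
Definition ideal X : Prop := X bot /\ down_closed X /\ join_closed X.
Definition filter X : Prop :=
  X top /\ (forall x y, X x -> x ≤ y -> X y) /\ (forall x y, X x -> X y -> X (meet x y)).
Definition disjoint X Y : Prop := forall x, X x -> Y x -> False.

Lemma ideal_principal (a : L) : ideal (fun z => z ≤ a).
Proof.
  split; [apply le_bot|]. split.
  - intros x y Hy Hxy. apply le_trans with y; assumption.
  - intros x y Hx Hy. apply join_lub; assumption.
Qed.

Lemma filter_principal (a : L) : filter (fun z => a ≤ z).
Proof.
  split; [apply le_top|]. split.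
  - intros x y Hx Hxy. apply le_trans with x; assumption.
  - intros x y Hx Hy. apply meet_glb; assumption.
Qed.

Lemma ideal_join_generated A (c : L) :
  ideal A -> ideal (fun z => exists i, A i /\ z ≤ join i c).
Proof.
  intros (A_bot & A_down & A_join). split; [|split].
  - exists bot. split; [exact A_bot | apply le_bot].
  - intros x y [i [Ai Hy]] Hxy. exists i. split; [exact Ai | apply le_trans with y; assumption].
  - intros x y [i [Ai Hx]] [j [Aj Hy]]. exists (join i j). split; [apply A_join; assumption|].
    apply join_lub.
    + apply le_trans with (join i c); [exact Hx|].
      apply join_mono; [apply le_join_l | apply le_refl].
    + apply le_trans with (join j c); [exact Hy|].
      apply join_mono; [apply le_join_r | apply le_refl].
Qed.

Variable F : L -> Prop.
Hypothesis F_filter : filter F.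

Definition maximal_disjoint A : Prop :=
  forall B, ideal B -> incl L A B -> (exists x, B x /\ ~ A x) -> exists x, B x /\ F x.

(* For [x, y] outside [A], maximality yields [f1 <= i1 \/ x] and [f2 <= i2 \/ y]
   with [f1, f2] in [F] and [i1, i2] in [A]; then [f1 /\ f2 <= i1 \/ i2 \/ (x /\ y)]. *)
Lemma maximal_disjoint_prime A :
  ideal A -> disjoint A F -> maximal_disjoint A -> prime_ideal L A.
Proof.
  intros A_ideal AF Amax. pose proof A_ideal as (A_bot & A_down & A_join).
  destruct F_filter as (F_top & F_up & F_meet).
  repeat split; try assumption.
  - intro A_top. exact (AF top A_top F_top).
  - intros x y Axy. apply NNPP. intro H. apply not_or_and in H as [nx ny].
    assert (escape : forall c, ~ A c -> exists f i, F f /\ A i /\ f ≤ join i c).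
    { intros c nc.
      destruct (Amax _ (ideal_join_generated A c A_ideal)) as [f [[i [Ai Hf]] Ff]].
      - intros z Az. exists z. split; [exact Az | apply le_join_l].
      - exists c. split; [|exact nc]. exists bot. split; [exact A_bot|].
        rewrite bot_join. apply le_refl.
      - exists f, i. auto. }
    destruct (escape x nx) as [f1 [i1 (F1 & A1 & H1)]].
    destruct (escape y ny) as [f2 [i2 (F2 & A2 & H2)]].
    apply (AF (meet f1 f2)); [|apply F_meet; assumption].
    apply A_down with (join (join i1 i2) (meet x y)); [apply A_join; auto|].
    rewrite join_meetDr. apply meet_mono.
    + apply le_trans with (join i1 x); [exact H1|].
      apply join_mono; [apply le_join_l | apply le_refl].
    + apply le_trans with (join i2 y); [exact H2|].
      apply join_mono; [apply le_join_r | apply le_refl].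
Qed.

Variable J : L -> Prop.
Hypotheses (J_ideal : ideal J) (JF : disjoint J F).

(* Zorn is applied to the down- and join-closed sets disjoint from [F] that are
   empty or contain [J]: the union of the empty chain must qualify. *)
Lemma exists_maximal_disjoint_ideal :
  exists A, ideal A /\ incl L J A /\ disjoint A F /\ maximal_disjoint A.
Proof.
  pose (P := fun X : L -> Prop => down_closed X /\ join_closed X /\ disjoint X F /\
                                  ((exists x, X x) -> incl L J X)).
  destruct (@classical_sets.Zorn_bigcup L P) as [A [(A_down & A_join & AF & AJ) Amax]].
  - intros C CP Ctot. repeat split.
    + intros x y [X CX Xy] Hxy. exists X; [exact CX|].
      destruct (CP X CX) as (X_down & _). apply X_down with y; assumption.
    + intros x y [X CX Xx] [Y CY Yy].
      destruct (CP X CX) as (_ & X_join & _), (CP Y CY) as (_ & Y_join & _).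
      destruct (Ctot X Y CX CY) as [XY|YX].
      * exists Y; [exact CY|]. apply Y_join; [apply XY|]; assumption.
      * exists X; [exact CX|]. apply X_join; [|apply YX]; assumption.
    + intros x [X CX Xx]. destruct (CP X CX) as (_ & _ & XF & _). apply XF, Xx.
    + intros [x [X CX Xx]] z Jz. exists X; [exact CX|].
      destruct (CP X CX) as (_ & _ & _ & XJ). apply XJ; [exists x|]; assumption.
  - assert (Abot : A bot).
    { apply NNPP. intro nA. apply (Amax J).
      - split; [intros z Az; exfalso; apply nA, A_down with z; [exact Az | apply le_bot]|].
        intro JA. apply nA, JA, J_ideal.
      - destruct J_ideal as (_ & J_down & J_join).
        repeat split; try assumption. intros _ z Jz. exact Jz. }
    assert (A_ideal : ideal A) by (repeat split; assumption).
    exists A. split; [exact A_ideal|]. split; [apply AJ; exists bot; exact Abot|].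
    split; [exact AF|].
    intros B B_ideal AB [b [Bb nAb]]. apply NNPP. intro nBF.
    apply (Amax B).
    + split; [exact AB|]. intro BA. exact (nAb (BA b Bb)).
    + destruct B_ideal as (B_bot & B_down & B_join). repeat split; auto.
      * intros x Bx Fx. apply nBF. exists x. auto.
      * intros _ z Jz. apply AB, AJ. exists bot. exact Abot. exact Jz.
Qed.

Theorem prime_ideal_separation :
  exists I, prime_ideal L I /\ incl L J I /\ disjoint I F.
Proof.
  destruct exists_maximal_disjoint_ideal as (A & A_ideal & JA & AF & Amax).
  exists A. split; [apply maximal_disjoint_prime; assumption|]. auto.
Qed.

End Separation.

Section PrimeIdeals.
Context {L : pmAlgebra}.
Implicit Types P Q X Y Z : L -> Prop.

Lemma prime_bot P : prime_ideal L P -> P bot.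
Proof. intro H. apply H. Qed.

Lemma prime_down P x y : prime_ideal L P -> P y -> x ≤ y -> P x.
Proof. intro H. apply H. Qed.

Lemma prime_join P x y : prime_ideal L P -> P x -> P y -> P (join x y).
Proof. intro H. apply H. Qed.

Lemma prime_top P : prime_ideal L P -> ~ P top.
Proof. intro H. apply H. Qed.

Lemma prime_meet P x y : prime_ideal L P -> P (meet x y) -> P x \/ P y.
Proof. intro H. apply H. Qed.

Lemma prime_pc P x : prime_ideal L P -> ~ P x -> P (pc x).
Proof.
  intros HP nx.
  assert (P_bot : P (meet x (pc x))) by (rewrite pc_meet; apply prime_bot, HP).
  destruct (prime_meet P x (pc x) HP P_bot) as [H|H]; [contradiction | exact H].
Qed.

Lemma prime_plus P x : prime_ideal L P -> P x -> ~ P (plus x).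
Proof.
  intros HP Px Pplus. apply (prime_top P HP). rewrite <- (join_plus x).
  apply prime_join; assumption.
Qed.

Definition zeta P : L -> Prop := fun a => ~ P (inv a).

Lemma prime_zeta P : prime_ideal L P -> prime_ideal L (zeta P).
Proof.
  intro HP. unfold zeta. repeat split.
  - rewrite inv_bot. apply prime_top, HP.
  - intros x y ny Hxy Px.
    apply ny, prime_down with (inv x); [exact HP | exact Px | apply inv_anti, Hxy].
  - intros x y nx ny. rewrite inv_join. intro Pxy.
    destruct (prime_meet P _ _ HP Pxy); contradiction.
  - rewrite inv_top. intro nbot. apply nbot, prime_bot, HP.
  - intros x y nxy. rewrite inv_meet in nxy. apply NNPP. intro H.
    apply not_or_and in H as [Px Py]. apply NNPP in Px. apply NNPP in Py.
    apply nxy, prime_join; assumption.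
Qed.

Lemma zeta_anti P Q : incl L P Q -> incl L (zeta Q) (zeta P).
Proof. intros PQ x nQ Px. exact (nQ (PQ _ Px)). Qed.

Lemma incl_zeta_zeta P : incl L P (zeta (zeta P)).
Proof. intros x Px nP. apply nP. rewrite invK. exact Px. Qed.

(* [F = {z | y /\ p <= z for some p not in P}] is a filter avoiding [0], since
   [y /\ p = 0] forces [p <= y* = 0]. *)
Lemma exists_prime_below_dense P y :
  prime_ideal L P -> dense y -> P y -> exists Q, prime_ideal L Q /\ incl L Q P /\ ~ Q y.
Proof.
  intros HP Hy Py.
  set (F := fun z => exists p, ~ P p /\ meet y p ≤ z).
  assert (F_filter : filter F).
  { split; [|split].
    - exists top. split; [apply prime_top, HP | apply le_top].
    - intros x z [p [np Hp]] Hxz. exists p. split; [exact np | apply le_trans with x; assumption].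
    - intros x z [p [np Hp]] [q [nq Hq]]. exists (meet p q). split.
      + intro Hpq. destruct (prime_meet P p q HP Hpq); contradiction.
      + apply meet_glb.
        * apply le_trans with (meet y p); [|exact Hp].
          apply meet_mono; [apply le_refl | apply le_meet_l].
        * apply le_trans with (meet y q); [|exact Hq].
          apply meet_mono; [apply le_refl | apply le_meet_r]. }
  destruct (prime_ideal_separation F F_filter (fun z => z ≤ bot) (ideal_principal bot))
    as (Q & HQ & _ & QF).
  - intros z Hz [p [np Hp]]. apply np, prime_down with bot; [exact HP | apply prime_bot, HP|].
    unfold dense in Hy. rewrite <- Hy. apply pc_le, le_bot_eq, le_trans with z; assumption.
  - exists Q. split; [exact HQ|]. split.
    + intros x Qx. apply NNPP. intro nPx. apply (QF (meet y x)).
      * apply prime_down with x; [exact HQ | exact Qx | apply le_meet_r].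
      * exists x. split; [exact nPx | apply le_refl].
    + intro Qy. apply (QF y Qy). exists top. split; [apply prime_top, HP|].
      rewrite meet_top. apply le_refl.
Qed.

Lemma exists_prime_above_codense P x :
  prime_ideal L P -> dense (inv x) -> ~ P x -> exists K, prime_ideal L K /\ incl L P K /\ K x.
Proof.
  intros HP Hx nPx.
  destruct (exists_prime_below_dense (zeta P) (inv x)) as (Q & HQ & QP & nQx).
  - apply prime_zeta, HP.
  - exact Hx.
  - unfold zeta. rewrite invK. exact nPx.
  - exists (zeta Q). split; [apply prime_zeta, HQ|]. split; [|exact nQx].
    intros z Pz. apply zeta_anti with (zeta P); [exact QP | apply incl_zeta_zeta, Pz].
Qed.

End PrimeIdeals.

Definition prime_chains_collapse (L : pmAlgebra) : Prop :=
  forall X Y Z : L -> Prop, prime_ideal L X -> prime_ideal L Y -> prime_ideal L Z ->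
    incl L X Y -> incl L Y Z -> same L X Y \/ same L Y Z.

Lemma codense_le_dense_chains (L : pmAlgebra) :
  codense_le_dense L -> prime_chains_collapse L.
Proof.
  intros HR X Y Z HX HY HZ XY YZ.
  destruct (classic (same L X Y)) as [|nXY]; [left; assumption | right].
  assert (new_a : exists a, Y a /\ ~ X a).
  { apply NNPP. intro H. apply nXY. intro a. split; [apply XY|].
    intro Ya. apply NNPP. intro nXa. apply H. exists a. auto. }
  destruct new_a as [a [Ya nXa]].
  intro b. split; [apply YZ|]. intro Zb. apply NNPP. intro nYb.
  assert (Y_dense : Y (join a (pc a))).
  { apply prime_join; [exact HY | exact Ya | apply XY, prime_pc; assumption]. }
  assert (Y_codense : Y (meet b (plus b))).
  { apply prime_down with (join a (pc a)); [exact HY | exact Y_dense|].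
    apply HR; [apply dense_inv_meet_plus | apply dense_join_pc]. }
  destruct (prime_meet _ _ _ HY Y_codense) as [Yb | Yplus]; [contradiction|].
  exact (prime_plus Z b HZ Zb (YZ _ Yplus)).
Qed.

Lemma chains_codense_le_dense (L : pmAlgebra) :
  prime_chains_collapse L -> codense_le_dense L.
Proof.
  intros Hch x y Hx Hy. apply NNPP. intro nxy.
  destruct (prime_ideal_separation (fun z => x ≤ z) (filter_principal x)
              (fun z => z ≤ y) (ideal_principal y)) as (P & HP & yP & PF).
  { intros z Hzy Hxz. apply nxy, le_trans with z; assumption. }
  assert (Py : P y) by (apply yP, le_refl).
  assert (nPx : ~ P x) by (intro Px; apply (PF x Px), le_refl).
  destruct (exists_prime_below_dense P y HP Hy Py) as (Q & HQ & QP & nQy).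
  destruct (exists_prime_above_codense P x HP Hx nPx) as (K & HK & PK & Kx).
  destruct (Hch Q P K HQ HP HK QP PK) as [QP' | PK'].
  - exact (nQy (proj2 (QP' y) Py)).
  - exact (nPx (proj2 (PK' x) Kx)).
Qed.

Lemma same_sym (L : pmAlgebra) (I J : L -> Prop) : same L I J -> same L J I.
Proof. intros H x. symmetry. apply H. Qed.

Lemma height_chains (L : pmAlgebra) : height_at_most_1 L <-> prime_chains_collapse L.
Proof.
  split.
  - intros Hh X Y Z HX HY HZ XY YZ.
    set (C := fun W => W = X \/ W = Y \/ W = Z).
    assert (C_chain : pchain L C).
    { split.
      - intros W [->|[->| ->]]; assumption.
      - intros V W [->|[->| ->]] [->|[->| ->]]; unfold incl; auto. }
    destruct (Hh C C_chain X Y Z) as [H|[H|H]]; unfold C; auto.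
    left. intro a. split; [apply XY | intro Ya; apply H, YZ, Ya].
  - intros Hch C [C_prime C_total] I J K CI CJ CK.
    assert (collapse : forall X Y Z, C X -> C Y -> C Z -> incl L X Y -> incl L Y Z ->
                                     same L X Y \/ same L Y Z) by (intros; apply Hch; auto).
    destruct (C_total I J CI CJ), (C_total J K CJ CK), (C_total I K CI CK);
      first [ solve [destruct (collapse I J K); auto using same_sym]
            | solve [destruct (collapse I K J); auto using same_sym]
            | solve [destruct (collapse J I K); auto using same_sym]
            | solve [destruct (collapse J K I); auto using same_sym]
            | solve [destruct (collapse K I J); auto using same_sym]
            | solve [destruct (collapse K J I); auto using same_sym]
            ].
Qed.

Theorem theorem3p1 (L : pmAlgebra) : regular L <-> height_at_most_1 L.
Proof.
  rewrite height_chains. split; intro H.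
  - apply codense_le_dense_chains, regular_codense_le_dense, H.
  - apply codense_le_dense_regular, chains_codense_le_dense, H.
Qed.
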